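(* Let $F_*$ be the category of finite sets, with the injective maps as cofibrations and the bijections as weak equivalences. Then $F_*$ is a pre-cylinder category, and it is the free pre-cylinder category on one object $*$ (the singleton): for every pre-cylinder category $\mathcal D$, evaluation at the singleton gives an equivalence, natural in $\mathcal D$, between the category of morphisms of pre-cylinder categories $F_*\to\mathcal D$ (with natural transformations) and $\mathcal D$; the morphism corresponding to $X\in\mathcal D$ sends a finite set $S$ to the coproduct $\coprod_{s\in S}X$.
   Context: A cofibration category is a category with a class of maps called cofibrations such that isomorphisms are cofibrations, cofibrations are closed under composition, there is an initial object $0$ with every $0\to X$ a cofibration, and pushouts of cofibrations along arbitrary maps exist and are cofibrations. A pre-cylinder category is a cofibration category with an additional class of maps, the weak equivalences, containing isomorphisms, closed under composition, satisfying 2-out-of-6 (if $f,g,h$ composable with $f\circ g$ and $g\circ h$ weak equivalences then $f,g,h,f\circ g\circ h$ are) and the cube lemma: given a natural transformation between spans $B\leftarrow A\rightarrow C$ and $B'\leftarrow A'\rightarrow C'$ whose left legs $A\hookrightarrow B$, $A'\hookrightarrow B'$ are cofibrations and whose three components are weak equivalences, the induced map $B\sqcup_AC\to B'\sqcup_{A'}C'$ is a weak equivalence. A morphism of pre-cylinder categories is a functor preserving cofibrations, weak equivalences, the initial object and pushouts along cofibrations. *)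

From mathcomp Require Import all_boot.

Set Implicit Arguments.
Unset Strict Implicit.
Unset Printing Implicit Defensive.

Record Category := {
  Ob :> Type;
  Hom : Ob -> Ob -> Type;
  idm : forall a, Hom a a;
  compm : forall a b c, Hom b c -> Hom a b -> Hom a c;
  comp_id_l : forall a b (f : Hom a b), compm (idm b) f = f;
  comp_id_r : forall a b (f : Hom a b), compm f (idm a) = f;
  comp_assoc : forall a b c d (f : Hom a b) (g : Hom b c) (h : Hom c d),
      compm h (compm g f) = compm (compm h g) f
}.

Arguments Hom {C} a b : rename.
Arguments idm {C} a : rename.
Arguments compm {C a b c} g f : rename.

Definition MorClass (C : Category) := forall a b : C, Hom a b -> Prop.

Definition is_iso (C : Category) (a b : C) (f : Hom a b) : Prop :=
  exists g : Hom b a, compm g f = idm a /\ compm f g = idm b.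

Definition is_initial (C : Category) (z : C) : Prop :=
  forall x : C, exists f : Hom z x, forall g : Hom z x, g = f.

Definition is_pushout (C : Category) (A B C' P : C)
    (f : Hom A B) (g : Hom A C') (i : Hom B P) (j : Hom C' P) : Prop :=
  compm i f = compm j g /\
  forall (Q : C) (u : Hom B Q) (v : Hom C' Q), compm u f = compm v g ->
    exists h : Hom P Q,
      (compm h i = u /\ compm h j = v) /\
      forall h' : Hom P Q, compm h' i = u -> compm h' j = v -> h' = h.

Definition is_coproduct (C : Category) (I : Type) (X : I -> C) (P : C)
    (inj : forall i, Hom (X i) P) : Prop :=
  forall (Q : C) (u : forall i, Hom (X i) Q),
    exists h : Hom P Q,
      (forall i, compm h (inj i) = u i) /\
      forall h' : Hom P Q, (forall i, compm h' (inj i) = u i) -> h' = h.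

Definition is_cofibration_category (C : Category) (cof : MorClass C) : Prop :=
  (forall (a b : C) (f : Hom a b), is_iso f -> cof a b f) /\
  (forall (a b c : C) (f : Hom a b) (g : Hom b c),
      cof a b f -> cof b c g -> cof a c (compm g f)) /\
  (exists z : C, is_initial z /\ forall (x : C) (f : Hom z x), cof z x f) /\
  (forall (A B C' : C) (f : Hom A B) (g : Hom A C'), cof A B f ->
      exists (P : C) (i : Hom B P) (j : Hom C' P), is_pushout f g i j) /\
  (forall (A B C' P : C) (f : Hom A B) (g : Hom A C') (i : Hom B P) (j : Hom C' P),
      cof A B f -> is_pushout f g i j -> cof C' P j).

Definition two_out_of_six (C : Category) (weq : MorClass C) : Prop :=
  forall (A B C' D : C) (h : Hom A B) (g : Hom B C') (f : Hom C' D),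
    weq B D (compm f g) -> weq A C' (compm g h) ->
    weq C' D f /\ weq B C' g /\ weq A B h /\ weq A D (compm f (compm g h)).

Definition cube_lemma (C : Category) (cof weq : MorClass C) : Prop :=
  forall (A B C' A' B' C'' : C)
         (f : Hom A B) (g : Hom A C') (f' : Hom A' B') (g' : Hom A' C'')
         (a : Hom A A') (b : Hom B B') (c : Hom C' C''),
    cof A B f -> cof A' B' f' ->
    compm b f = compm f' a -> compm c g = compm g' a ->
    weq A A' a -> weq B B' b -> weq C' C'' c ->
    forall (P P' : C) (i : Hom B P) (j : Hom C' P) (i' : Hom B' P') (j' : Hom C'' P'),
      is_pushout f g i j -> is_pushout f' g' i' j' ->
      forall h : Hom P P', compm h i = compm i' b -> compm h j = compm j' c ->
        weq P P' h.

Definition is_precylinder_category (C : Category) (cof weq : MorClass C) : Prop :=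
  is_cofibration_category cof /\
  (forall (a b : C) (f : Hom a b), is_iso f -> weq a b f) /\
  (forall (a b c : C) (f : Hom a b) (g : Hom b c),
      weq a b f -> weq b c g -> weq a c (compm g f)) /\
  two_out_of_six weq /\
  cube_lemma cof weq.

Record PreCylCat := {
  pc_cat :> Category;
  pc_cof : MorClass pc_cat;
  pc_weq : MorClass pc_cat;
  pc_axioms : is_precylinder_category pc_cof pc_weq
}.

Record Functor (C D : Category) := {
  fobj :> C -> D;
  fmap : forall a b : C, Hom a b -> Hom (fobj a) (fobj b);
  fmap_id : forall a, fmap (idm a) = idm (fobj a);
  fmap_comp : forall a b c (f : Hom a b) (g : Hom b c),
      fmap (compm g f) = compm (fmap g) (fmap f)
}.
Arguments fmap {C D} F {a b} f : rename.

Definition is_precyl_morphism (C : Category) (cofC weqC : MorClass C)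
    (D : Category) (cofD weqD : MorClass D) (F : Functor C D) : Prop :=
  (forall (a b : C) (f : Hom a b), cofC a b f -> cofD (F a) (F b) (fmap F f)) /\
  (forall (a b : C) (f : Hom a b), weqC a b f -> weqD (F a) (F b) (fmap F f)) /\
  (forall z : C, is_initial z -> is_initial (F z)) /\
  (forall (A B C' P : C) (f : Hom A B) (g : Hom A C') (i : Hom B P) (j : Hom C' P),
      cofC A B f -> is_pushout f g i j ->
      is_pushout (fmap F f) (fmap F g) (fmap F i) (fmap F j)).

Definition is_natural (C D : Category) (F G : Functor C D)
    (eta : forall a : C, Hom (F a) (G a)) : Prop :=
  forall (a b : C) (f : Hom a b), compm (eta b) (fmap F f) = compm (fmap G f) (eta a).

Definition FinSets : Category.
Proof.
refine (@Build_Category finType (fun A B : finType => A -> B)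
          (fun A => fun x => x) (fun A B C g f => fun x => g (f x)) _ _ _);
  by [].
Defined.

Definition FinSet_cof : MorClass FinSets := fun A B (f : A -> B) => injective f.
Definition FinSet_weq : MorClass FinSets := fun A B (f : A -> B) => bijective f.

Definition star : FinSets := unit : finType.
Definition pt (S : FinSets) (s : S) : Hom star S := fun _ : unit => s.

Arguments pc_cof : clear implicits.
Arguments pc_weq : clear implicits.

Definition is_FinSet_morphism (D : PreCylCat) (F : Functor FinSets D) : Prop :=
  @is_precyl_morphism FinSets FinSet_cof FinSet_weq D (pc_cof D) (pc_weq D) F.

Definition elts (S : FinSets) : Type := Finite.sort S.

(* A pushout of finite sets along an injection f : A -> B is C' together with
   B minus the image of f; in particular it is also a pushout of sets.  Since the
   weak equivalences of F_* are its isomorphisms, 2-out-of-6 and the cube lemma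
   hold there because they hold for isomorphisms in any category.
   Removing one point at a time presents every finite set S as an iterated pushout
   of * over the empty set.  A morphism Phi preserves these pushouts, so Phi S is
   the coproduct of S copies of Phi *; a natural transformation out of Phi is
   therefore determined by, and freely extends from, its component at *.
   Conversely, the same iterated pushouts, taken in D, build the coproduct of S
   copies of any X; S |-> coproduct is a functor, and it preserves pushouts along
   injections because those are computed elementwise, hence also cofibrations. *)

From mathcomp Require Import all_boot.
From Stdlib Require Import ClassicalEpsilon FunctionalExtensionality.

Set Implicit Arguments.
Unset Strict Implicit.
Unset Printing Implicit Defensive.

Section Isomorphisms.
Variable C : Category.

Lemma iso_id (a : C) : is_iso (idm a).
Proof. by exists (idm a); rewrite comp_id_l. Qed.

Lemma iso_comp (a b c : C) (f : Hom a b) (g : Hom b c) :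
  is_iso f -> is_iso g -> is_iso (compm g f).
Proof.
move=> [f' [ff' f'f]] [g' [gg' g'g]]; exists (compm f' g'); split.
  by rewrite comp_assoc -(comp_assoc g) gg' comp_id_r.
by rewrite comp_assoc -(comp_assoc f') f'f comp_id_r.
Qed.

Lemma iso_linv_rinv (a b : C) (f : Hom a b) (l r : Hom b a) :
  compm l f = idm a -> compm f r = idm b -> is_iso f.
Proof.
move=> lf fr; exists l; split=> //.
have -> : l = r by rewrite -[l]comp_id_r -fr comp_assoc lf comp_id_l.
exact: fr.
Qed.

Lemma two_out_of_six_iso : two_out_of_six (@is_iso C).
Proof.
move=> A B C' D h g f [k [kfg fgk]] [m [mgh ghm]].
have iso_fg : is_iso (compm f g) by exists k.
have iso_gh : is_iso (compm g h) by exists m.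
have iso_g : is_iso g.
  apply: (iso_linv_rinv (l := compm k f) (r := compm h m)).
    by rewrite -comp_assoc.
  by rewrite comp_assoc.
have [g' [g'g gg']] := iso_g.
have iso_g' : is_iso g' by exists g.
have iso_f : is_iso f.
  by rewrite (_ : f = compm (compm f g) g'); [exact: iso_comp | rewrite -comp_assoc gg' comp_id_r].
have iso_h : is_iso h.
  by rewrite (_ : h = compm g' (compm g h)); [exact: iso_comp | rewrite comp_assoc g'g comp_id_l].
by do !split=> //; do 2!apply: iso_comp => //.
Qed.

Lemma fmap_iso (D : Category) (F : Functor C D) (a b : C) (f : Hom a b) :
  is_iso f -> is_iso (fmap F f).
Proof.
move=> [g [gf fg]]; exists (fmap F g).
by rewrite -!fmap_comp gf fg !fmap_id.
Qed.

End Isomorphisms.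

Section Pushouts.
Variable C : Category.

Lemma pushout_ext (A B C' P Q : C) (f : Hom A B) (g : Hom A C') (i : Hom B P)
    (j : Hom C' P) (h h' : Hom P Q) :
  is_pushout f g i j -> compm h i = compm h' i -> compm h j = compm h' j -> h = h'.
Proof.
move=> [sq univ] hi hj.
have [k [_ k_uniq]] := univ Q (compm h' i) (compm h' j)
  ltac:(by rewrite -!comp_assoc sq).
by rewrite (k_uniq h hi hj) (k_uniq h' erefl erefl).
Qed.

Lemma pushout_map_iso (A B C' A' B' C'' P P' : C)
    (f : Hom A B) (g : Hom A C') (f' : Hom A' B') (g' : Hom A' C'')
    (a : Hom A A') (b : Hom B B') (c : Hom C' C'')
    (i : Hom B P) (j : Hom C' P) (i' : Hom B' P') (j' : Hom C'' P') (h : Hom P P') :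
  is_iso a -> is_iso b -> is_iso c ->
  compm b f = compm f' a -> compm c g = compm g' a ->
  is_pushout f g i j -> is_pushout f' g' i' j' ->
  compm h i = compm i' b -> compm h j = compm j' c -> is_iso h.
Proof.
move=> [a' [a'a aa']] [b' [b'b bb']] [c' [c'c cc']] bf cg po po' hi hj.
have b'f' : compm b' f' = compm f a'.
  by rewrite -[compm b' f']comp_id_r -aa' comp_assoc -(comp_assoc a) -bf
             comp_assoc b'b comp_id_l.
have c'g' : compm c' g' = compm g a'.
  by rewrite -[compm c' g']comp_id_r -aa' comp_assoc -(comp_assoc a) -cg
             comp_assoc c'c comp_id_l.
have sq : compm (compm i b') f' = compm (compm j c') g'.
  by rewrite -!comp_assoc b'f' c'g' !comp_assoc (proj1 po).
have [k [[ki kj] _]] := proj2 po' P _ _ sq.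
exists k; split.
  apply: (pushout_ext po); rewrite comp_id_l -comp_assoc.
    by rewrite hi comp_assoc ki -comp_assoc b'b comp_id_r.
  by rewrite hj comp_assoc kj -comp_assoc c'c comp_id_r.
apply: (pushout_ext po'); rewrite comp_id_l -comp_assoc.
  by rewrite ki comp_assoc hi -comp_assoc bb' comp_id_r.
by rewrite kj comp_assoc hj -comp_assoc cc' comp_id_r.
Qed.

Lemma pushout_compare_iso (A B C' P P' : C) (f : Hom A B) (g : Hom A C')
    (i : Hom B P) (j : Hom C' P) (i' : Hom B P') (j' : Hom C' P') :
  is_pushout f g i j -> is_pushout f g i' j' ->
  exists h : Hom P P', is_iso h /\ compm h i = i' /\ compm h j = j'.
Proof.
move=> po po'; have [h [[hi hj] _]] := proj2 po P' i' j' (proj1 po').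
exists h; split=> //.
apply: (pushout_map_iso (a := idm A) (b := idm B) (c := idm C') _ _ _ _ _ po po');
  rewrite ?comp_id_l ?comp_id_r //; exact: iso_id.
Qed.

Lemma pushout_sym (A B C' P : C) (f : Hom A B) (g : Hom A C') (i : Hom B P) (j : Hom C' P) :
  is_pushout f g i j -> is_pushout g f j i.
Proof.
move=> [sq univ]; split=> // Q u v vu.
by have [h [[hu hv] h_uniq]] := univ Q v u (esym vu); exists h; split=> // h' *; exact: h_uniq.
Qed.

End Pushouts.

Section InitialCoproducts.
Variable C : Category.

Lemma initial_hom_uniq (z : C) : is_initial z -> forall (x : C) (k k' : Hom z x), k = k'.
Proof. by move=> zI x k k'; have [k0 k0_uniq] := zI x; rewrite (k0_uniq k) (k0_uniq k'). Qed.

Lemma initial_iso (z z' : C) (k : Hom z z') : is_initial z -> is_initial z' -> is_iso k.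
Proof.
move=> zI z'I; have [m _] := z'I z.
by exists m; split; apply: initial_hom_uniq.
Qed.

Lemma cof_from_initial (cof : MorClass C) (z : C) (x : C) (f : Hom z x) :
  is_cofibration_category cof -> is_initial z -> cof z x f.
Proof.
move=> [iso_cof [comp_cof [[z0 [z0I z0_cof]] _]]] zI.
have [k _] := zI z0; have [f0 _] := z0I x.
have -> : f = compm f0 k by exact: initial_hom_uniq.
by apply: comp_cof; [apply: iso_cof; exact: initial_iso | exact: z0_cof].
Qed.

Section Coproducts.
Variables (I : Type) (X : I -> C) (P : C) (inj : forall i, Hom (X i) P).
Hypothesis P_coprod : is_coproduct inj.

Definition coprod_map (Q : C) (u : forall i, Hom (X i) Q) : Hom P Q :=
  proj1_sig (constructive_indefinite_description _ (P_coprod u)).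

Lemma coprod_mapE (Q : C) (u : forall i, Hom (X i) Q) i :
  compm (coprod_map u) (inj i) = u i.
Proof. by rewrite /coprod_map; case: constructive_indefinite_description => h [] /=. Qed.

Lemma coprod_ext (Q : C) (h h' : Hom P Q) :
  (forall i, compm h (inj i) = compm h' (inj i)) -> h = h'.
Proof.
move=> hh'; have [k [_ k_uniq]] := P_coprod (fun i => compm h' (inj i)).
by rewrite (k_uniq h hh') (k_uniq h' (fun=> erefl)).
Qed.

Lemma coprod_empty_initial : (I -> False) -> is_initial P.
Proof.
move=> I0 Q; have [h [_ h_uniq]] := P_coprod (fun i => False_rect (Hom (X i) Q) (I0 i)).
by exists h => h'; apply: h_uniq => i; case: (I0 i).
Qed.

End Coproducts.

Lemma initial_coprod_empty (I : Type) (X : I -> C) (z : C) (inj : forall i, Hom (X i) z) :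
  (I -> False) -> is_initial z -> is_coproduct inj.
Proof.
move=> I0 zI Q u; have [k k_uniq] := zI Q.
by exists k; split=> [i | h' _]; [case: (I0 i) | exact: k_uniq].
Qed.

Lemma coprod_single_iso (I : Type) (X : C) (P : C) (inj : I -> Hom X P) (i0 : I) :
  (forall i, i = i0) -> is_coproduct (X := fun=> X) inj -> is_iso (inj i0).
Proof.
move=> I1 P_coprod; exists (coprod_map P_coprod (fun=> idm X)); split.
  exact: coprod_mapE.
apply: (coprod_ext P_coprod) => i; rewrite (I1 i).
by rewrite -comp_assoc coprod_mapE comp_id_l comp_id_r.
Qed.

Lemma coprod_pushout_initial (X : C) (I J : Type) (i0 : I) (emb : J -> I)
    (Q : C) (injQ : J -> Hom X Q) (z P : C) (f : Hom z X) (g : Hom z Q)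
    (i : Hom X P) (j : Hom Q P) (inj : I -> Hom X P) :
  is_initial z -> is_coproduct (X := fun=> X) injQ -> is_pushout f g i j ->
  inj i0 = i -> (forall t, inj (emb t) = compm j (injQ t)) ->
  (forall s, s = i0 \/ exists t, s = emb t) ->
  is_coproduct (X := fun=> X) inj.
Proof.
move=> zI Q_coprod [_ po_univ] inj_i0 inj_emb cover R u.
pose v := coprod_map Q_coprod (fun t => u (emb t)).
have [h [[hi hj] h_uniq]] := po_univ R (u i0) v (initial_hom_uniq zI _ _).
exists h; split.
  move=> s; case: (cover s) => [-> | [t ->]]; first by rewrite inj_i0.
  by rewrite inj_emb comp_assoc hj coprod_mapE.
move=> h' h'_inj; apply: h_uniq; first by rewrite -inj_i0.
by apply: (coprod_ext Q_coprod) => t; rewrite -comp_assoc -inj_emb h'_inj coprod_mapE.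
Qed.

End InitialCoproducts.

Lemma FinSet_hom_ext (A B : FinSets) (f g : Hom A B) : f =1 g -> f = g.
Proof. exact: functional_extensionality. Qed.

Lemma FinSet_homE (A B : FinSets) (f g : Hom A B) : f = g -> f =1 g.
Proof. by move=> ->. Qed.

Lemma FinSet_bijective_iso (A B : FinSets) (f : Hom A B) : bijective f <-> is_iso f.
Proof.
split=> [[g gf fg] | [g [gf fg]]].
  by exists g; split; apply: FinSet_hom_ext.
by exists g; apply: FinSet_homE.
Qed.

Lemma FinSet_void_initial : is_initial (void : FinSets).
Proof. by move=> X; exists (fun v : void => match v with end) => g; apply: FinSet_hom_ext. Qed.

Lemma FinSet_empty_initial (S : FinSets) : (S -> False) -> is_initial S.
Proof.
move=> S0 X; exists (fun s => False_rect _ (S0 s)) => g.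
by apply: FinSet_hom_ext => s; case: (S0 s).
Qed.

Lemma FinSet_initial_empty (S : FinSets) : is_initial S -> S -> False.
Proof. by move=> SI s; have [k _] := SI (void : FinSets); case: (k s). Qed.

Definition void_hom (X : FinSets) : Hom (void : FinSets) X := fun v => match v with end.

Lemma void_hom_inj (X : FinSets) : injective (void_hom X).
Proof. by case. Qed.

Section FinSetPushout.
Variables (A B : FinSets) (f : Hom A B).

Definition compl_codom : FinSets := {b : B | b \notin codom f}.

Lemma codom_or_compl (b : B) : (exists a, b = f a) \/ exists t : compl_codom, b = val t.
Proof.
case: (boolP (b \in codom f)) => [/codomP [a ->] | Hb]; first by left; exists a.
by right; exists (exist _ b Hb).
Qed.

Definition codom_case (T : Type) (v : A -> T) (u : compl_codom -> T) (b : B) : T :=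
  match @decP (b \in codom f) _ idP with
  | left Hb => v (iinv Hb)
  | right Hb => u (exist _ b (introN idP Hb))
  end.

Lemma codom_case_compl (T : Type) (v : A -> T) (u : compl_codom -> T) (t : compl_codom) :
  codom_case v u (val t) = u t.
Proof.
rewrite /codom_case; case: decP => [Hb | Hb]; last by congr u; apply: val_inj.
by have := valP t; rewrite Hb.
Qed.

Hypothesis f_inj : injective f.

Lemma codom_case_f (T : Type) (v : A -> T) (u : compl_codom -> T) a :
  codom_case v u (f a) = v a.
Proof.
by rewrite /codom_case; case: decP => [Hb | Hb]; [rewrite iinv_f | case: (Hb (codom_f f a))].
Qed.

Lemma FinSet_pushout_compl :
  is_pushout (void_hom compl_codom) (void_hom A) (fun t : compl_codom => val t) f.
Proof.
split; first exact: FinSet_hom_ext.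
move=> Q u v _; exists (codom_case v u); split.
  by split; apply: FinSet_hom_ext => x /=; rewrite ?codom_case_f ?codom_case_compl.
move=> w /FinSet_homE wu /FinSet_homE wv; apply: FinSet_hom_ext => b.
case: (codom_or_compl b) => [[a ->] | [t ->]]; rewrite ?codom_case_f ?codom_case_compl.
  exact: wv.
exact: wu.
Qed.

Variables (C' : FinSets) (g : Hom A C').

Definition std_pushout : FinSets := (C' + compl_codom)%type.

Definition std_pushout_inB : Hom B std_pushout := codom_case (fun a => inl (g a)) inr.

Definition std_pushout_case (T : Type) (v : C' -> T) (u : B -> T) (p : std_pushout) : T :=
  match p with inl c => v c | inr t => u (val t) end.

Lemma std_pushout_case_inl (T : Type) (v : C' -> T) (u : B -> T) :
  (forall a, u (f a) = v (g a)) -> forall b, std_pushout_case v u (std_pushout_inB b) = u b.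
Proof.
move=> uv b; rewrite /std_pushout_inB.
by case: (codom_or_compl b) => [[a ->] | [t ->]]; rewrite ?codom_case_f ?codom_case_compl.
Qed.

Lemma std_pushoutP : is_pushout f g std_pushout_inB inl.
Proof.
split; first by apply: FinSet_hom_ext => a; rewrite /= /std_pushout_inB codom_case_f.
move=> Q u v /FinSet_homE uv; exists (std_pushout_case v u); split.
  by split; apply: FinSet_hom_ext => // b; apply: std_pushout_case_inl.
move=> w /FinSet_homE wi /FinSet_homE wj; apply: FinSet_hom_ext => -[c | t] /=.
  exact: wj.
by rewrite -wi /= /std_pushout_inB codom_case_compl.
Qed.

Variables (P : FinSets) (i : Hom B P) (j : Hom C' P).
Hypothesis po : is_pushout f g i j.

Lemma FinSet_pushout_std_iso : exists (h : Hom P std_pushout) (k : Hom std_pushout P),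
  [/\ forall p, k (h p) = p, forall b, h (i b) = std_pushout_inB b, forall c, h (j c) = inl c,
      forall b, k (std_pushout_inB b) = i b & forall c, k (inl c) = j c].
Proof.
have [h [[k [/FinSet_homE kh _]] [/FinSet_homE hi /FinSet_homE hj]]] :=
  pushout_compare_iso po std_pushoutP.
rewrite /= in kh hi hj.
by exists h, k; split=> // [b | c]; rewrite -?hi -?hj kh.
Qed.

Lemma FinSet_pushout_inj_r : injective j.
Proof.
have [h [_ [_ _ hj _ _]]] := FinSet_pushout_std_iso.
by move=> c c' /(congr1 h); rewrite !hj => -[].
Qed.

Lemma FinSet_pushout_univ (T : Type) (u : B -> T) (v : C' -> T) :
  (forall a, u (f a) = v (g a)) ->
  exists w : P -> T, [/\ forall b, w (i b) = u b, forall c, w (j c) = v c &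
    forall w' : P -> T, (forall b, w' (i b) = u b) -> (forall c, w' (j c) = v c) -> w' =1 w].
Proof.
move=> uv; have [h [k [kh hi hj ki kj]]] := FinSet_pushout_std_iso.
exists (fun p => std_pushout_case v u (h p)); split=> [b | c | w' w'_i w'_j p].
- by rewrite hi std_pushout_case_inl.
- by rewrite hj.
rewrite -{1}(kh p); case: (h p) => [c | t] /=; first by rewrite kj w'_j.
by rewrite -[inr t](codom_case_compl (fun a => inl (g a))) ki w'_i.
Qed.

End FinSetPushout.

Lemma pt_inj (S : FinSets) (s0 : S) : injective (pt s0).
Proof. by do 2!case. Qed.

Lemma compl_codom_pt_cover (S : FinSets) (s0 : S) (s : S) :
  s = s0 \/ exists t : compl_codom (pt s0), s = val t.
Proof.
by case: (codom_or_compl (pt s0) s) => [[x ->] | [t ->]]; [left | right; exists t].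
Qed.

Lemma FinSet_ind (Pr : FinSets -> Prop) :
  (forall S : FinSets, (S -> False) -> Pr S) ->
  (forall (S : FinSets) (s0 : S), Pr (compl_codom (pt s0)) -> Pr S) ->
  forall S : FinSets, Pr S.
Proof.
move=> Pr_empty Pr_step S; have [n] := ubnP #|S|; elim: n S => // n IH S cardS.
case: (pickP (@predT S)) => [s0 _ | S0]; last by apply: Pr_empty => s; have := S0 s.
apply: (Pr_step S s0); apply: IH; rewrite card_sig; apply: leq_trans (cardS : #|S| <= n).
apply: proper_card; apply/properP; split; first exact/subsetP.
by exists s0; rewrite // inE negbK codom_f.
Qed.

Lemma FinSet_precylinder : is_precylinder_category FinSet_cof FinSet_weq.
Proof.
have weq_iso A B (f : Hom A B) : FinSet_weq f <-> is_iso f := FinSet_bijective_iso f.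
split; last split; last split; last split.
- split; last split; last split; last split.
  + by move=> A B f /weq_iso /bij_inj.
  + by move=> A B C' f g f_inj g_inj; apply: inj_comp.
  + by exists (void : FinSets); split; [exact: FinSet_void_initial | move=> X f []].
  + move=> A B C' f g f_inj.
    by exists _, (std_pushout_inB f g), inl; exact: std_pushoutP.
  + by move=> A B C' P f g i j f_inj; apply: FinSet_pushout_inj_r.
- by move=> A B f /weq_iso.
- by move=> A B C' f g f_bij g_bij; apply: bij_comp.
- move=> A B C' D h g f /weq_iso fg /weq_iso gh.
  by have [/weq_iso ? [/weq_iso ? [/weq_iso ? /weq_iso ?]]] := two_out_of_six_iso fg gh.
- move=> A B C' A' B' C'' f g f' g' a b c _ _ bf cg /weq_iso a_iso /weq_iso b_iso
    /weq_iso c_iso P P' i j i' j' po po' h hi hj.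
  by apply/weq_iso; exact: (pushout_map_iso a_iso b_iso c_iso bf cg po po' hi hj).
Qed.

Section FreeOnStar.
Variable D : PreCylCat.

Lemma precyl_morphism_coprod (Phi : Functor FinSets D) : is_FinSet_morphism Phi ->
  forall S : FinSets, is_coproduct (X := fun=> Phi star) (fun s : elts S => fmap Phi (pt s)).
Proof.
move=> [_ [_ [Phi_init Phi_po]]]; elim/FinSet_ind => [S S0 | S s0 IH].
  by apply: initial_coprod_empty => //; apply: Phi_init; exact: FinSet_empty_initial.
have po := Phi_po _ _ _ _ _ _ _ _ (@void_hom_inj _) (FinSet_pushout_compl (@pt_inj _ s0)).
apply: (coprod_pushout_initial (i0 := s0) (emb := val) _ IH (pushout_sym po)) => //.
- by apply: Phi_init; exact: FinSet_void_initial.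
- by move=> t; rewrite -fmap_comp.
- exact: compl_codom_pt_cover.
Qed.

Lemma pt_star (s : elts star) : pt s = idm star.
Proof. by apply: FinSet_hom_ext; case: s => -[]. Qed.

Section Naturality.
Variables (Phi Psi : Functor FinSets D).
Hypothesis Phi_morph : is_FinSet_morphism Phi.

Lemma natural_eq_star (eta eta' : forall S : FinSets, Hom (Phi S) (Psi S)) :
  is_natural eta -> is_natural eta' -> eta star = eta' star -> eta = eta'.
Proof.
move=> eta_nat eta'_nat eq_star; apply: functional_extensionality_dep => S.
have Phi_coprod := precyl_morphism_coprod Phi_morph.
by apply: (coprod_ext (@Phi_coprod S)) => s; rewrite eta_nat eta'_nat eq_star.
Qed.

Lemma natural_extend_star (u : Hom (Phi star) (Psi star)) :
  exists eta : forall S : FinSets, Hom (Phi S) (Psi S), is_natural eta /\ eta star = u.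
Proof.
have Phi_coprod := precyl_morphism_coprod Phi_morph.
pose eta S := coprod_map (Phi_coprod S) (fun s => compm (fmap Psi (pt s)) u).
exists eta; split.
  move=> S T f; apply: (coprod_ext (Phi_coprod S)) => s.
  rewrite /eta -comp_assoc -fmap_comp -[compm f (pt s)]/(pt (f s)).
  rewrite (coprod_mapE (Phi_coprod T) _ (f s)) -comp_assoc (coprod_mapE (Phi_coprod S) _ s).
  by rewrite comp_assoc -fmap_comp.
apply: (coprod_ext (Phi_coprod star)) => s.
by rewrite (coprod_mapE (Phi_coprod star) _ s) pt_star !fmap_id comp_id_l comp_id_r.
Qed.

End Naturality.

Lemma precyl_coprod_exists (X : D) (S : FinSets) :
  exists (P : D) (inj : elts S -> Hom X P), is_coproduct (X := fun=> X) inj.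
Proof.
have [[_ [_ [[z [zI z_cof]] [po_exists _]]]] _] := pc_axioms D.
elim/FinSet_ind: S => [S S0 | S s0 [Q [injQ Q_coprod]]].
  by exists z, (fun s => False_rect _ (S0 s)); apply: initial_coprod_empty.
have [zX _] := zI X; have [zQ _] := zI Q.
have [P [i [j po]]] := po_exists _ _ _ zX zQ (z_cof _ _).
exists P, (fun s => if insub s is Some t then compm j (injQ t) else i).
apply: (coprod_pushout_initial (i0 := s0) (emb := val) zI Q_coprod po).
- by rewrite insubF // codom_f.
- by move=> t; rewrite valK.
- exact: compl_codom_pt_cover.
Qed.

End FreeOnStar.

Section Copower.
Variables (D : PreCylCat) (X : D).

Definition copower (S : FinSets) : D :=
  proj1_sig (constructive_indefinite_description _ (precyl_coprod_exists X S)).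

Definition copower_inj (S : FinSets) : elts S -> Hom X (copower S) :=
  proj1_sig (constructive_indefinite_description _
    (proj2_sig (constructive_indefinite_description _ (precyl_coprod_exists X S)))).

Local Arguments copower_inj : clear implicits.

Lemma copower_coprod (S : FinSets) : is_coproduct (X := fun=> X) (copower_inj S).
Proof. exact: proj2_sig. Qed.

Local Arguments copower_coprod : clear implicits.

Definition copower_map (S T : FinSets) (f : Hom S T) : Hom (copower S) (copower T) :=
  coprod_map (copower_coprod S) (fun s => copower_inj T (f s)).

Lemma copower_mapE (S T : FinSets) (f : Hom S T) s :
  compm (copower_map f) (copower_inj S s) = copower_inj T (f s).
Proof. exact: coprod_mapE. Qed.

Lemma copower_map_id (S : FinSets) : copower_map (idm S) = idm (copower S).
Proof. by apply: (coprod_ext (copower_coprod S)) => s; rewrite copower_mapE comp_id_l. Qed.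

Lemma copower_map_comp (S T U : FinSets) (f : Hom S T) (g : Hom T U) :
  copower_map (compm g f) = compm (copower_map g) (copower_map f).
Proof. by apply: (coprod_ext (copower_coprod S)) => s; rewrite -comp_assoc !copower_mapE. Qed.

Definition copower_functor : Functor FinSets D := Build_Functor copower_map_id copower_map_comp.

End Copower.

Arguments copower_inj {D} X S.
Arguments copower_coprod {D} X S.

Section CoproductFunctor.
Variables (D : PreCylCat) (X : D) (Phi : Functor FinSets D)
  (inj : forall S : FinSets, elts S -> Hom X (Phi S)).
Hypothesis Phi_coprod : forall S : FinSets, is_coproduct (X := fun=> X) (@inj S).
Hypothesis inj_natural :
  forall (S T : FinSets) (f : Hom S T) s, compm (fmap Phi f) (@inj S s) = @inj T (f s).

Lemma coprod_functor_initial (z : FinSets) : is_initial z -> is_initial (Phi z).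
Proof.
by move=> /FinSet_initial_empty z0; apply: (coprod_empty_initial (@Phi_coprod z)).
Qed.

Lemma coprod_functor_pushout (A B C' P : FinSets) (f : Hom A B) (g : Hom A C')
    (i : Hom B P) (j : Hom C' P) :
  injective f -> is_pushout f g i j ->
  is_pushout (fmap Phi f) (fmap Phi g) (fmap Phi i) (fmap Phi j).
Proof.
move=> f_inj po; split; first by rewrite -!fmap_comp (proj1 po).
move=> Q U V UV.
pose u b := compm U (@inj B b); pose v c := compm V (@inj C' c).
have uv a : u (f a) = v (g a) by rewrite /u /v -!inj_natural !comp_assoc UV.
have [w [wi wj w_uniq]] := FinSet_pushout_univ f_inj po uv.
have [h [hw h_uniq]] := @Phi_coprod P Q w.
exists h; split.
  split; [apply: (coprod_ext (@Phi_coprod B)) => b | apply: (coprod_ext (@Phi_coprod C')) => c];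
    by rewrite -comp_assoc inj_natural hw ?wi ?wj.
move=> h' h'i h'j; apply: h_uniq; apply: w_uniq => [b | c].
  by rewrite -inj_natural comp_assoc h'i.
by rewrite -inj_natural comp_assoc h'j.
Qed.

Lemma coprod_functor_morphism : is_FinSet_morphism Phi.
Proof.
have [[iso_cof [_ [_ [_ po_cof]]]] [iso_weq _]] := pc_axioms D.
split; last split; last split.
- move=> A B f f_inj.
  have po := coprod_functor_pushout (@void_hom_inj _) (FinSet_pushout_compl f_inj).
  apply: po_cof po; apply: cof_from_initial; first exact: (proj1 (pc_axioms D)).
  exact: coprod_functor_initial FinSet_void_initial.
- by move=> A B f /FinSet_bijective_iso /(fmap_iso Phi) /iso_weq.
- exact: coprod_functor_initial.
- exact: coprod_functor_pushout.
Qed.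

End CoproductFunctor.

Arguments coprod_functor_morphism {D X} Phi {inj}.

Theorem mainTheorem11 :
  is_precylinder_category FinSet_cof FinSet_weq /\
  forall D : PreCylCat,
    (forall Phi Psi : Functor FinSets D,
        is_FinSet_morphism Phi -> is_FinSet_morphism Psi ->
        (forall u : Hom (Phi star) (Psi star),
            exists eta : forall S : FinSets, Hom (Phi S) (Psi S),
              is_natural eta /\ eta star = u) /\
        (forall eta eta' : forall S : FinSets, Hom (Phi S) (Psi S),
            is_natural eta -> is_natural eta' -> eta star = eta' star ->
            eta = eta')) /\
    (forall X : D,
        exists (Phi : Functor FinSets D) (e : Hom X (Phi star)),
          is_FinSet_morphism Phi /\ is_iso e /\
          forall S : FinSets,
            @is_coproduct D (elts S) (fun _ : elts S => X) (Phi S)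
                         (fun s : elts S => compm (fmap Phi (pt s)) e)).
Proof.
split; first exact: FinSet_precylinder.
move=> D; split.
  move=> Phi Psi Phi_morph _; split; first exact: natural_extend_star.
  by move=> eta eta'; apply: natural_eq_star.
move=> X; exists (copower_functor X), (copower_inj X star tt); split.
  exact: (coprod_functor_morphism (copower_functor X) (copower_coprod X) (copower_mapE X)).
split; first by apply: (coprod_single_iso _ (copower_coprod X star)) => -[].
move=> S; rewrite (_ : (fun s => _) = copower_inj X S); first exact: copower_coprod.
by apply: functional_extensionality => s; apply: copower_mapE.
Qed.
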